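(* Let $X$ be a Polish space with a fixed compatible metric $d$, $h:X\to\mathbb R$, and let $\alpha,\xi$ be countable ordinals. For every closed set $P\subseteq X$, the set $\Omega^\alpha_{h,\xi}(P)$ has property $(\alpha,\omega^{\omega^\xi}\cdot\alpha)$ with respect to $h$.
   Context: $B(x,\varepsilon)$ is the open $d$-ball. $D$-derivation: for $f$ defined on a closed set containing $F$, $\varepsilon>0$, closed $F$: $D^0(f,\varepsilon,F)=F$, $D^1(f,\varepsilon,F)$ = set of $x\in F$ such that every neighbourhood $U$ of $x$ contains $x_1,x_2\in F\cap U$ with $|f(x_1)-f(x_2)|\ge\varepsilon$, $D^{\alpha+1}=D^1(f,\varepsilon,D^\alpha(f,\varepsilon,F))$, intersections at limits. A closed set $P$ has property $(\xi,\zeta)$ with respect to $h$ if for every $x\in P$ and every $\varepsilon>0$ there are a closed set $Q\subseteq B(x,\varepsilon)$ and a function $g:Q\to\mathbb N$ such that $g=1$ on $D^\xi(g,1,Q)\cup\{x\}$ and $x\in D^\zeta(gh,1,Q)$. $A'$ = accumulation points of $A$ in $X$. For closed $P$ and $\varepsilon>0$, $O(h,\varepsilon,P)$ = set of $x\in P$ such that every neighbourhood of $x$ contains $y\in P$ with $|h(y)-h(x)|\ge\varepsilon$; $\delta(h,\varepsilon,P)=\overline{O(h,\varepsilon,P)}$, iterated ($\delta^0(P)=P$, successor by applying $\delta$, intersections at limits). For each countable $\xi$ a sequence $(\xi_n)$ strictly increasing to $\omega^{\omega^\xi}$ is fixed, $\Omega_{h,\xi}(P)=\bigcap_n\big[\bigcup_{\eta>0}\delta^{\xi_n}(h,\eta,P)\big]'$,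 and $\Omega^\alpha_{h,\xi}$ denotes its $\alpha$-th iterate (with $\Omega^0_{h,\xi}(P)=P$). *)

From Stdlib Require Import Reals.
Open Scope R_scope.

Definition is_metric {X : Type} (d : X -> X -> R) : Prop :=
  (forall x y, 0 <= d x y) /\
  (forall x y, d x y = 0 <-> x = y) /\
  (forall x y, d x y = d y x) /\
  (forall x y z, d x z <= d x y + d y z).

(* separable: a countable dense set (enumerated with possible gaps, so that
   the empty space is allowed) *)
Definition separable {X : Type} (d : X -> X -> R) : Prop :=
  exists e : nat -> option X,
    forall x r, 0 < r -> exists n y, e n = Some y /\ d x y < r.

Definition complete {X : Type} (d : X -> X -> R) : Prop :=
  forall u : nat -> X,
    (forall eps, 0 < eps -> exists N, forall m n, (N <= m)%nat -> (N <= n)%nat ->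
        d (u m) (u n) < eps) ->
    exists l, forall eps, 0 < eps -> exists N, forall n, (N <= n)%nat -> d (u n) l < eps.

Definition polish_metric {X : Type} (d : X -> X -> R) : Prop :=
  is_metric d /\ separable d /\ complete d.

Definition closed {X : Type} (d : X -> X -> R) (F : X -> Prop) : Prop :=
  forall x, (forall r, 0 < r -> exists y, F y /\ d x y < r) -> F x.

Definition closure {X : Type} (d : X -> X -> R) (A : X -> Prop) : X -> Prop :=
  fun x => forall r, 0 < r -> exists y, A y /\ d x y < r.

Definition derived {X : Type} (d : X -> X -> R) (A : X -> Prop) : X -> Prop :=
  fun x => forall r, 0 < r -> exists y, A y /\ y <> x /\ d x y < r.

(** * Countable ordinals as Brouwer trees *)

Inductive ord : Type :=
| OZ : ord
| OS : ord -> ord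
| OL : (nat -> ord) -> ord.   (* OL f = sup_n f n *)

(* order on the ordinal values denoted by trees *)
Inductive ole : ord -> ord -> Prop :=
| ole_Z b : ole OZ b
| ole_SS a b : ole a b -> ole (OS a) (OS b)
| ole_L_l f b : (forall n, ole (f n) b) -> ole (OL f) b
| ole_L_r a f n : ole a (f n) -> ole a (OL f).

Definition olt (a b : ord) : Prop := ole (OS a) b.
Definition oeq (a b : ord) : Prop := ole a b /\ ole b a.

Fixpoint ofin (n : nat) : ord :=
  match n with O => OZ | S n => OS (ofin n) end.

Definition oomega : ord := OL ofin.

Fixpoint oadd (a b : ord) : ord :=
  match b with
  | OZ => a
  | OS b => OS (oadd a b)
  | OL f => OL (fun n => oadd a (f n))
  end.

Fixpoint omul (a b : ord) : ord :=
  match b with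
  | OZ => OZ
  | OS b => oadd (omul a b) a
  | OL f => OL (fun n => omul a (f n))
  end.

Fixpoint oexp_omega (b : ord) : ord :=
  match b with
  | OZ => OS OZ
  | OS b => omul (oexp_omega b) oomega
  | OL f => OL (fun n => oexp_omega (f n))
  end.

Fixpoint iter {X : Type} (Phi : (X -> Prop) -> (X -> Prop)) (a : ord) (P : X -> Prop)
  : X -> Prop :=
  match a with
  | OZ => P
  | OS a => Phi (iter Phi a P)
  | OL f => fun x => forall n, iter Phi (f n) P x
  end.

Definition D1 {X : Type} (d : X -> X -> R) (f : X -> R) (eps : R) (F : X -> Prop)
  : X -> Prop :=
  fun x => F x /\ forall r, 0 < r -> exists x1 x2,
      F x1 /\ F x2 /\ d x x1 < r /\ d x x2 < r /\ Rabs (f x1 - f x2) >= eps.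

Definition Dder {X : Type} (d : X -> X -> R) (f : X -> R) (eps : R) (a : ord)
  (F : X -> Prop) : X -> Prop := iter (D1 d f eps) a F.

Definition has_property {X : Type} (d : X -> X -> R) (h : X -> R) (xi zeta : ord)
  (P : X -> Prop) : Prop :=
  forall x, P x -> forall eps, 0 < eps ->
    exists (Q : X -> Prop) (g : X -> nat),
      closed d Q /\ (forall y, Q y -> d x y < eps) /\
      (forall y, Dder d (fun z => INR (g z)) 1 xi Q y \/ y = x -> g y = 1%nat) /\
      Dder d (fun z => INR (g z) * h z) 1 zeta Q x.

Definition Oosc {X : Type} (d : X -> X -> R) (h : X -> R) (eps : R) (P : X -> Prop)
  : X -> Prop :=
  fun x => P x /\ forall r, 0 < r -> exists y, P y /\ d x y < r /\ Rabs (h y - h x) >= eps.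

Definition delta {X : Type} (d : X -> X -> R) (h : X -> R) (eps : R) (P : X -> Prop)
  : X -> Prop := closure d (Oosc d h eps P).

(* s is the fixed sequence (xi_n) increasing to omega^(omega^xi) *)
Definition Omega {X : Type} (d : X -> X -> R) (h : X -> R) (s : nat -> ord)
  (P : X -> Prop) : X -> Prop :=
  fun x => forall n,
    derived d (fun y => exists eta, 0 < eta /\ iter (delta d h eta) (s n) P y) x.

Definition Omega_iter {X : Type} (d : X -> X -> R) (h : X -> R) (s : nat -> ord)
  (a : ord) (P : X -> Prop) : X -> Prop := iter (Omega d h s) a P.

(* Around any point z of delta^gamma(eta, F), where F has property
   (a, b), there are witnesses (Q, g) with g = N on the a-th derivative and z in the
   (b + gamma)-th derivative of g h, for any N with N eta >= 1: an oscillation of h of size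
   eta becomes a jump of size >= 1 of N h, so each delta-step adds one to the rank (induction
   on gamma).  Witnesses at points z_k -> x are glued into a single witness at x; at x the
   rank of g h is the supremum of the ranks at the z_k, while the (a+1)-th g-derivative is
   empty off x because g is constant on each piece's a-th derivative.  This gives
   zeta a + sup_n xi_n >= zeta (a + 1) at successor stages; limit stages glue in the same
   way.  Only sup_n xi_n >= omega^(omega^xi) is used, not the monotonicity of (xi_n). *)

From Stdlib Require Import Reals Lra Lia Classical ClassicalEpsilon.
Open Scope R_scope.

Lemma ole_refl a : ole a a.
Proof. induction a; constructor; auto. intro n. eapply ole_L_r; eauto. Qed.

Lemma ole_L_inv f c : ole (OL f) c -> forall n, ole (f n) c.
Proof.
  intros H; remember (OL f) as a eqn:E; revert f E.
  induction H; intros g E m; try discriminate.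
  - injection E as ->. auto.
  - eapply ole_L_r. eapply IHole; eauto.
Qed.

Lemma ole_trans a b c : ole a b -> ole b c -> ole a c.
Proof.
  intros H; revert c; induction H as [b|a b _ IH|f b _ IH|a f n _ IH]; intros c Hc.
  - constructor.
  - remember (OS b) as b' eqn:E; revert b E IH.
    induction Hc; intros b0 E IH; try discriminate.
    + injection E as ->. constructor. auto.
    + eapply ole_L_r. eapply IHHc; eauto.
  - constructor; intro n; auto.
  - apply IH. eapply ole_L_inv; eauto.
Qed.

Lemma ole_OS a : ole a (OS a).
Proof.
  induction a as [| |f IH]; constructor; auto.
  intro n. eapply ole_trans; [apply IH|].
  constructor. eapply ole_L_r; apply ole_refl.
Qed.

Lemma oadd_ge a b : ole a (oadd a b).
Proof.
  induction b; simpl.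
  - apply ole_refl.
  - eapply ole_trans; [eassumption | apply ole_OS].
  - eapply ole_L_r with (n := 0%nat); auto.
Qed.

Lemma oadd_mono_l a a' c : ole a a' -> ole (oadd a c) (oadd a' c).
Proof.
  intro H; induction c; simpl; auto; constructor; auto.
  intro n. eapply ole_L_r; eauto.
Qed.

Lemma oadd_mono_r a b b' : ole b b' -> ole (oadd a b) (oadd a b').
Proof.
  intro H; induction H; simpl.
  - apply oadd_ge.
  - constructor; auto.
  - constructor; auto.
  - eapply ole_L_r; eauto.
Qed.

Lemma omul_mono_r a b b' : ole b b' -> ole (omul a b) (omul a b').
Proof.
  intro H; induction H; simpl.
  - constructor.
  - apply oadd_mono_l; auto.
  - constructor; auto.
  - eapply ole_L_r; eauto.
Qed.

Lemma ole_total a b : ole a b \/ olt b a.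
Proof.
  unfold olt. revert b; induction a as [|a IHa|f IHf]; intro b.
  - left; constructor.
  - induction b as [|b _|g IHg].
    + right. do 2 constructor.
    + destruct (IHa b); [left | right]; constructor; auto.
    + destruct (classic (exists m, ole (OS a) (g m))) as [[m Hm]|Hn].
      * left; eapply ole_L_r; eauto.
      * right. do 2 constructor. intro m.
        destruct (IHg m) as [H|H]; [exfalso; eauto|].
        inversion H; subst; auto.
  - destruct (classic (forall n, ole (f n) b)) as [H|H].
    + left; constructor; auto.
    + right. apply not_all_ex_not in H as [n Hn].
      destruct (IHf n b) as [H|H]; [contradiction|].
      eapply ole_L_r; eauto.
Qed.

Lemma OL_attained_or_cofinal (f : nat -> ord) :
  (exists n, ole (OL f) (f n)) \/ (forall n, exists m, olt (f n) (f m)).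
Proof.
  destruct (classic (exists n, forall m, ole (f m) (f n))) as [[n Hn]|H].
  - left. exists n. constructor; auto.
  - right. intro n. apply NNPP. intro Hm. apply H. exists n. intro m.
    destruct (ole_total (f m) (f n)) as [H1|H1]; [auto | exfalso; eauto].
Qed.

Section Iteration.
Context {X : Type} (Phi : (X -> Prop) -> X -> Prop).
Hypothesis Phi_mono :
  forall A B : X -> Prop, (forall x, A x -> B x) -> forall x, Phi A x -> Phi B x.

Lemma iter_mono a (A B : X -> Prop) :
  (forall x, A x -> B x) -> forall x, iter Phi a A x -> iter Phi a B x.
Proof. intro H; induction a; simpl; eauto. Qed.

Variable C : (X -> Prop) -> Prop.
Hypothesis C_Phi : forall A, C A -> C (Phi A).
Hypothesis C_inter :
  forall A : nat -> X -> Prop, (forall n, C (A n)) -> C (fun x => forall n, A n x).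
Hypothesis Phi_sub : forall A, C A -> forall x, Phi A x -> A x.

Lemma iter_C a A : C A -> C (iter Phi a A).
Proof. intro H; induction a; simpl; auto. Qed.

Lemma iter_sub a A : C A -> forall x, iter Phi a A x -> A x.
Proof.
  intros HA; induction a as [|a IH|f IH]; simpl; intros x Hx; auto.
  - apply IH. eapply Phi_sub; [apply iter_C|]; eauto.
  - eapply IH, (Hx 0%nat).
Qed.

Lemma iter_antitone a b A :
  C A -> ole a b -> forall x, iter Phi b A x -> iter Phi a A x.
Proof.
  intros HA H; induction H; simpl; intros x Hx.
  - eapply iter_sub; eauto.
  - eapply Phi_mono; eauto.
  - auto.
  - auto.
Qed.

End Iteration.

Section Metric.
Context {X : Type} (d : X -> X -> R) (Hd : is_metric d).

Lemma dist_ge0 x y : 0 <= d x y. Proof. apply Hd. Qed.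
Lemma dist_xx x : d x x = 0. Proof. apply Hd. auto. Qed.
Lemma dist_sym x y : d x y = d y x. Proof. apply Hd. Qed.
Lemma dist_triangle x y z : d x z <= d x y + d y z. Proof. apply Hd. Qed.

Lemma dist_gt0 x y : x <> y -> 0 < d x y.
Proof.
  intro H. destruct (Rle_lt_or_eq_dec 0 (d x y) (dist_ge0 x y)) as [H1|H1]; auto.
  exfalso; apply H, Hd; auto.
Qed.

Lemma dist_small_eq x y : (forall r, 0 < r -> d x y < r) -> x = y.
Proof.
  intro H. apply Hd. destruct (Rle_lt_or_eq_dec 0 (d x y) (dist_ge0 x y)) as [H1|H1]; auto.
  specialize (H _ H1). lra.
Qed.

Lemma closed_inter (A : nat -> X -> Prop) :
  (forall n, closed d (A n)) -> closed d (fun x => forall n, A n x).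
Proof.
  intros H x Hx n. apply H. intros r Hr. destruct (Hx r Hr) as [y [Hy Hxy]]. eauto.
Qed.

Lemma closure_closed A : closed d (closure d A).
Proof.
  intros x Hx r Hr. destruct (Hx (r/2)) as [y [Hy Hxy]]; [lra|].
  destruct (Hy (r/2)) as [z [Hz Hyz]]; [lra|].
  exists z; split; auto. pose proof (dist_triangle x y z). lra.
Qed.

Lemma closure_mono (A B : X -> Prop) :
  (forall x, A x -> B x) -> forall x, closure d A x -> closure d B x.
Proof. intros H x Hx r Hr. destruct (Hx r Hr) as [y [Hy Hxy]]; eauto. Qed.

Lemma derived_closed A : closed d (derived d A).
Proof.
  intros x Hx r Hr. destruct (Hx (r/2)) as [p [Hp Hxp]]; [lra|].
  destruct (classic (p = x)) as [->|Hpx].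
  - apply Hp; lra.
  - pose proof (dist_gt0 _ _ Hpx).
    destruct (Hp (Rmin (r/2) (d p x))) as [y [Hy [Hyp Hpy]]]; [apply Rmin_pos; lra|].
    pose proof (Rmin_l (r/2) (d p x)); pose proof (Rmin_r (r/2) (d p x)).
    exists y. repeat split; auto.
    + intros ->. lra.
    + pose proof (dist_triangle x p y). lra.
Qed.

Lemma derived_mono (A B : X -> Prop) :
  (forall x, A x -> B x) -> forall x, derived d A x -> derived d B x.
Proof. intros H x Hx r Hr. destruct (Hx r Hr) as [y [Hy Hxy]]; eauto. Qed.

Lemma derived_sub A : closed d A -> forall x, derived d A x -> A x.
Proof. intros HA x Hx. apply HA. intros r Hr. destruct (Hx r Hr) as [y [? [_ ?]]]; eauto. Qed.

Lemma D1_mono f e (A B : X -> Prop) :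
  (forall x, A x -> B x) -> forall x, D1 d f e A x -> D1 d f e B x.
Proof.
  intros H x [Hx Hosc]. split; auto. intros r Hr.
  destruct (Hosc r Hr) as [x1 [x2 [? [? ?]]]]. exists x1, x2; auto.
Qed.

Lemma D1_closed f e A : closed d A -> closed d (D1 d f e A).
Proof.
  intros HA x Hx. split.
  - apply HA. intros r Hr. destruct (Hx r Hr) as [y [[Hy _] Hxy]]. eauto.
  - intros r Hr. destruct (Hx (r/2)) as [y [[_ Hy] Hxy]]; [lra|].
    destruct (Hy (r/2)) as [x1 [x2 [? [? [? [? ?]]]]]]; [lra|].
    pose proof (dist_triangle x y x1); pose proof (dist_triangle x y x2).
    exists x1, x2. repeat split; auto; lra.
Qed.

Lemma D1_const f e (A : X -> Prop) M x :
  0 < e -> (forall p, A p -> f p = M) -> ~ D1 d f e A x.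
Proof.
  intros He HM [_ Hosc]. destruct (Hosc 1 ltac:(lra)) as [x1 [x2 [H1 [H2 [_ [_ Hj]]]]]].
  rewrite (HM x1 H1), (HM x2 H2), Rminus_diag, Rabs_R0 in Hj. lra.
Qed.

Lemma Dder_mono f e b (A B : X -> Prop) :
  (forall x, A x -> B x) -> forall x, Dder d f e b A x -> Dder d f e b B x.
Proof. apply iter_mono, D1_mono. Qed.

Lemma Dder_sub f e b A x : Dder d f e b A x -> A x.
Proof. apply (iter_sub _ (fun _ => True)); auto. intros A0 _ y []; auto. Qed.

Lemma Dder_antitone f e a b A x : ole a b -> Dder d f e b A x -> Dder d f e a A x.
Proof.
  intro H. apply (iter_antitone _ (D1_mono f e) (fun _ => True)); auto.
  intros A0 _ y []; auto.
Qed.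

Lemma Dder_closed f e b A : closed d A -> closed d (Dder d f e b A).
Proof. apply iter_C; [apply D1_closed | apply closed_inter]. Qed.

Lemma Dder_ext f1 f2 e b A : (forall p, A p -> f1 p = f2 p) ->
  forall x, Dder d f1 e b A x <-> Dder d f2 e b A x.
Proof.
  intro H. induction b as [|b IH|g IH]; simpl; intro x.
  - tauto.
  - unfold D1. split; intros [H1 H2]; (split; [apply IH; auto|]);
      intros r Hr; destruct (H2 r Hr) as [x1 [x2 [? [? [? [? ?]]]]]];
      exists x1, x2; repeat split; try apply IH; auto.
    + rewrite <- !H by (eapply Dder_sub; eauto). auto.
    + rewrite !H by (eapply Dder_sub, IH; eauto). auto.
  - split; intros H0 n; apply IH, H0.
Qed.

Lemma Dder_extend f1 f2 e b (A B : X -> Prop) :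
  (forall p, A p -> B p /\ f1 p = f2 p) ->
  forall x, Dder d f1 e b A x -> Dder d f2 e b B x.
Proof.
  intros H x Hx. apply (Dder_mono f2 e b A); [apply H|].
  apply (Dder_ext f1 f2 e b A); [apply H | exact Hx].
Qed.

Lemma Dder_jumps f1 f2 e b A :
  (forall x1 x2, Rabs (f1 x1 - f1 x2) >= e -> Rabs (f2 x1 - f2 x2) >= e) ->
  forall x, Dder d f1 e b A x -> Dder d f2 e b A x.
Proof.
  intro H. unfold Dder. induction b as [|b IH|g IH]; simpl; intros x Hx; auto.
  eapply D1_mono; [apply IH|].
  destruct Hx as [H1 H2]. split; auto. intros r Hr.
  destruct (H2 r Hr) as [x1 [x2 [? [? [? [? ?]]]]]]. exists x1, x2; auto 7.
Qed.

Lemma Dder_local f e b (A B : X -> Prop) c rho :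
  (forall p, d c p < rho -> (A p <-> B p)) ->
  forall p, d c p < rho -> (Dder d f e b A p <-> Dder d f e b B p).
Proof.
  intro H. unfold Dder. induction b as [|b IH|g IH]; simpl; intros p Hp.
  - auto.
  - set (r0 := rho - d c p).
    assert (Hloc : forall q, d p q < r0 -> d c q < rho).
    { intros q Hq. pose proof (dist_triangle c p q). unfold r0 in Hq. lra. }
    unfold D1. split; intros [H1 H2]; (split; [apply IH; auto|]);
      intros r Hr; destruct (H2 (Rmin r r0)) as [x1 [x2 [? [? [? [? ?]]]]]];
      try (apply Rmin_pos; unfold r0; lra);
      pose proof (Rmin_l r r0); pose proof (Rmin_r r r0);
      exists x1, x2; repeat split; try lra; auto;
      (apply IH; [apply Hloc; lra | auto]).
  - split; intros H0 n; apply IH; auto.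
Qed.

Lemma delta_mono h eta (A B : X -> Prop) :
  (forall x, A x -> B x) -> forall x, delta d h eta A x -> delta d h eta B x.
Proof.
  intro H. apply closure_mono. intros x [Hx Hosc]. split; auto.
  intros r Hr. destruct (Hosc r Hr) as [y [? ?]]; eauto.
Qed.

Lemma delta_sub h eta A : closed d A -> forall x, delta d h eta A x -> A x.
Proof.
  intros HA x Hx. apply HA. eapply closure_mono; [|apply Hx]. intros y [Hy _]; auto.
Qed.

Lemma delta_derived h eta (T : X -> Prop) y :
  0 < eta -> delta d h eta T y -> derived d T y.
Proof.
  intros Heta Hy r Hr. destruct (Hy r Hr) as [z [[Hz Hosc] Hyz]].
  destruct (classic (z = y)) as [->|Hzy]; [|eauto].
  destruct (Hosc r Hr) as [w [Hw [Hyw Hh]]]. exists w. repeat split; auto.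
  intros ->. rewrite Rminus_diag, Rabs_R0 in Hh. lra.
Qed.

Lemma iter_delta_antitone h eta a b A x :
  closed d A -> ole a b -> iter (delta d h eta) b A x -> iter (delta d h eta) a A x.
Proof.
  intros HA Hab. apply (iter_antitone _ (delta_mono h eta) (closed d)); auto.
  - intros; apply closure_closed.
  - apply closed_inter.
  - apply delta_sub.
Qed.

Lemma Omega_mono h s (A B : X -> Prop) :
  (forall x, A x -> B x) -> forall x, Omega d h s A x -> Omega d h s B x.
Proof.
  intros H x Hx n. eapply derived_mono; [|apply (Hx n)].
  intros y [eta [Heta Hy]]. exists eta. split; auto.
  eapply iter_mono; [apply delta_mono | apply H | auto].
Qed.

Lemma Omega_closed h s A : closed d (Omega d h s A).
Proof. apply closed_inter. intro n. apply derived_closed. Qed.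

Lemma Omega_derived h s A : closed d A -> forall x, Omega d h s A x -> derived d A x.
Proof.
  intros HA x Hx. eapply derived_mono; [|apply (Hx 0%nat)].
  intros y [eta [_ Hy]]. eapply (iter_sub _ (closed d)); eauto.
  - intros; apply closure_closed.
  - apply closed_inter.
  - apply delta_sub.
Qed.

Lemma Omega_iter_closed h s b A : closed d A -> closed d (Omega_iter d h s b A).
Proof. apply iter_C; [intros; apply Omega_closed | apply closed_inter]. Qed.

Lemma Omega_iter_antitone h s a b A x :
  closed d A -> ole a b -> Omega_iter d h s b A x -> Omega_iter d h s a A x.
Proof.
  intros HA Hab. apply (iter_antitone _ (Omega_mono h s) (closed d)); auto.
  - intros; apply Omega_closed.
  - apply closed_inter.
  - intros A0 HA0 y Hy. eapply derived_sub, Omega_derived; eauto.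
Qed.

End Metric.

Definition cyc (k : nat) : nat := (k - Nat.sqrt k * Nat.sqrt k)%nat.

Lemma cyc_square_add m n : (n <= m)%nat -> cyc (m * m + n) = n.
Proof. intro H. unfold cyc. rewrite (Nat.sqrt_unique (m * m + n) m); nia. Qed.

Section Gluing.
Context {X : Type} (d : X -> X -> R) (Hd : is_metric d).
Variables (c : X) (zs : nat -> X) (Qs : nat -> X -> Prop).
Let r k := d c (zs k).
Hypothesis zs_neq : forall k, zs k <> c.
Hypothesis r_decay : forall k, r (S k) <= r k / 10.
Hypothesis Qs_small : forall k p, Qs k p -> d (zs k) p < r k / 10.
Hypothesis Qs_closed : forall k, closed d (Qs k).

Lemma zs_dist_pos k : 0 < r k.
Proof. apply (dist_gt0 d Hd), not_eq_sym, zs_neq. Qed.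

Lemma zs_dist_antitone i j : (i <= j)%nat -> r j <= r i.
Proof.
  induction 1 as [|j _ IH]; [lra|]. pose proof (r_decay j); pose proof (zs_dist_pos j). lra.
Qed.

Lemma zs_dist_comparable_eq i j : r i < 3 * r j -> r j < 3 * r i -> i = j.
Proof.
  intros Hij Hji. pose proof (zs_dist_pos i); pose proof (zs_dist_pos j).
  destruct (Nat.lt_trichotomy i j) as [Hlt|[Heq|Hlt]]; auto; exfalso.
  - pose proof (zs_dist_antitone (S i) j Hlt); pose proof (r_decay i). lra.
  - pose proof (zs_dist_antitone (S j) i Hlt); pose proof (r_decay j). lra.
Qed.

Lemma piece_annulus k p : Qs k p -> 9/10 * r k < d c p < 11/10 * r k.
Proof.
  intro H. pose proof (Qs_small k p H).
  pose proof (dist_triangle d Hd c (zs k) p); pose proof (dist_triangle d Hd c p (zs k)).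
  rewrite (dist_sym d Hd p (zs k)) in *. unfold r in *. lra.
Qed.

Definition glued (p : X) : Prop := p = c \/ exists k, Qs k p.

Lemma glued_near_piece k q : d (zs k) q < r k / 2 -> (glued q <-> Qs k q).
Proof.
  intro Hq. pose proof (zs_dist_pos k).
  pose proof (dist_triangle d Hd c (zs k) q); pose proof (dist_triangle d Hd c q (zs k)).
  rewrite (dist_sym d Hd q (zs k)) in *. fold (r k) in *.
  split; [|intro; right; eauto].
  intros [->|[j Hj]].
  - rewrite dist_xx in * by exact Hd. lra.
  - pose proof (piece_annulus j q Hj); pose proof (zs_dist_pos j).
    replace k with j; auto. apply zs_dist_comparable_eq; lra.
Qed.

Lemma glued_closed : closed d glued.
Proof.
  intros p Hp. destruct (classic (p = c)) as [->|Hpc]; [left; auto|].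
  set (t := d c p). assert (Ht : 0 < t) by apply (dist_gt0 d Hd), not_eq_sym, Hpc.
  assert (Hnear : forall q, glued q -> d p q < t / 10 ->
            exists k, Qs k q /\ r k < 3 * t / 2 /\ t / 2 < r k).
  { intros q [->|[k Hk]] Hq.
    - pose proof (dist_sym d Hd p c). unfold t in *. lra.
    - exists k. split; auto. pose proof (piece_annulus k q Hk).
      pose proof (dist_triangle d Hd c p q); pose proof (dist_triangle d Hd c q p).
      rewrite (dist_sym d Hd q p) in *. unfold t in *. lra. }
  destruct (Hp (t / 10)) as [q [Hq Hpq]]; [lra|].
  destruct (Hnear q Hq Hpq) as [j [Hj Hrj]].
  right. exists j. apply Qs_closed. intros rr Hrr.
  destruct (Hp (Rmin rr (t / 10))) as [q' [Hq' Hpq']]; [apply Rmin_pos; lra|].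
  pose proof (Rmin_l rr (t / 10)); pose proof (Rmin_r rr (t / 10)).
  destruct (Hnear q' Hq' ltac:(lra)) as [i [Hi Hri]].
  exists q'. split; [|lra]. replace j with i; auto. apply zs_dist_comparable_eq; lra.
Qed.

Lemma glued_Dder f e b p : Dder d f e b glued p -> p = c \/ exists k, Dder d f e b (Qs k) p.
Proof.
  intro H. destruct (Dder_sub d f e b glued p H) as [Hp|[k Hk]]; [left; auto | right].
  exists k. pose proof (Qs_small k p Hk); pose proof (zs_dist_pos k).
  apply (Dder_local d Hd f e b glued (Qs k) (zs k) (r k / 2)); auto; [|lra].
  intros q Hq. apply glued_near_piece; auto.
Qed.

Lemma glued_ball p : glued p -> d c p < 2 * r 0.
Proof.
  pose proof (zs_dist_pos 0). intros [->|[k Hk]].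
  - rewrite dist_xx by exact Hd. lra.
  - pose proof (piece_annulus k p Hk); pose proof (zs_dist_antitone 0 k ltac:(lia)). lra.
Qed.

Lemma zs_dist_mul_succ_le k : r k * (INR k + 1) <= r 0.
Proof.
  induction k as [|k IH]; [simpl; lra|]. rewrite S_INR.
  pose proof (r_decay k); pose proof (zs_dist_pos k); pose proof (zs_dist_pos (S k)).
  pose proof (pos_INR k).
  nra.
Qed.

Lemma zs_revisits n rho : 0 < rho -> exists k, cyc k = n /\ r k < rho.
Proof.
  intro Hrho. destruct (INR_archimed rho (r 0) Hrho) as [K HK].
  set (m := Nat.max n K). exists (m * m + n)%nat. split; [apply cyc_square_add; lia|].
  set (k := (m * m + n)%nat).
  assert (HKk : INR K <= INR k) by (apply le_INR; unfold k, m; nia).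
  pose proof (zs_dist_mul_succ_le k); pose proof (zs_dist_pos k); pose proof (pos_INR K).
  destruct (Rlt_or_le (r k) rho) as [|Hge]; auto. nra.
Qed.

Variables (gs : nat -> X -> nat) (v : nat).

Definition glued_fun (p : X) : nat :=
  match excluded_middle_informative (exists k, Qs k p) with
  | left H => gs (proj1_sig (constructive_indefinite_description _ H)) p
  | right _ => v
  end.

Lemma glued_fun_piece k p : Qs k p -> glued_fun p = gs k p.
Proof.
  intro Hk. unfold glued_fun. destruct excluded_middle_informative as [H|H]; [|exfalso; eauto].
  destruct (constructive_indefinite_description _ H) as [j Hj]; simpl.
  replace j with k; auto. pose proof (piece_annulus j p Hj); pose proof (piece_annulus k p Hk).
  apply zs_dist_comparable_eq; lra.
Qed.

Lemma glued_fun_center : glued_fun c = v.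
Proof.
  unfold glued_fun. destruct excluded_middle_informative as [[k Hk]|]; auto.
  pose proof (piece_annulus k c Hk); pose proof (zs_dist_pos k).
  rewrite dist_xx in * by exact Hd. lra.
Qed.

Lemma glued_Dder_piece (T : X -> nat -> R) e b p :
  Dder d (fun z => T z (glued_fun z)) e b glued p -> p = c \/
  exists k, Dder d (fun z => T z (gs k z)) e b (Qs k) p /\ glued_fun p = gs k p.
Proof.
  intro H. destruct (glued_Dder _ _ _ _ H) as [|[k Hk]]; [left; auto | right].
  exists k. split; [|apply glued_fun_piece; eapply Dder_sub; eauto].
  revert Hk. apply Dder_ext. intros q Hq. rewrite (glued_fun_piece k q Hq). auto.
Qed.

End Gluing.

Definition localizable {X : Type} (d : X -> X -> R)
  (W : X -> (X -> Prop) -> (X -> nat) -> Prop) (x : X) : Prop :=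
  forall eps, 0 < eps -> exists Q g, closed d Q /\ (forall y, Q y -> d x y < eps) /\ W x Q g.

Section GluedFamily.
Context {X : Type} (d : X -> X -> R) (Hd : is_metric d).

Lemma rapid_sequence (c : X) eps (Sp : nat -> X -> (X -> Prop) -> (X -> nat) -> Prop) :
  0 < eps ->
  (forall k rho, 0 < rho -> exists z Q g, z <> c /\ d c z < rho /\ Sp k z Q g) ->
  exists zs Qs gs, d c (zs 0%nat) < eps /\
    forall k, zs k <> c /\ d c (zs (S k)) <= d c (zs k) / 10 /\ Sp k (zs k) (Qs k) (gs k).
Proof.
  intros Heps H.
  pose (spec := fun (kr : nat * R) (t : X * (X -> Prop) * (X -> nat)) =>
    0 < snd kr -> fst (fst t) <> c /\ d c (fst (fst t)) < snd kr /\
                  Sp (fst kr) (fst (fst t)) (snd (fst t)) (snd t)).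
  destruct (choice spec) as [sel Hsel].
  { intros [k rho]. destruct (Rlt_or_le 0 rho) as [Hr|Hr].
    - destruct (H k rho Hr) as [z [Q [g Hz]]]. exists (z, Q, g). intros _. exact Hz.
    - exists (c, fun _ => False, fun _ => 0%nat). intro; simpl in *; lra. }
  pose (rad := fix rad k :=
          match k with O => eps | S k' => d c (fst (fst (sel (k', rad k')))) / 10 end).
  set (zs := fun k => fst (fst (sel (k, rad k)))).
  assert (Hrad : forall k, 0 < rad k).
  { induction k as [|k IH]; [exact Heps|].
    destruct (Hsel (k, rad k) IH) as [Hz _].
    change (0 < d c (zs k) / 10). pose proof (dist_gt0 d Hd c (zs k) (not_eq_sym Hz)). lra. }
  exists zs, (fun k => snd (fst (sel (k, rad k)))), (fun k => snd (sel (k, rad k))).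
  split; [apply (Hsel (0%nat, eps) Heps)|].
  intro k. destruct (Hsel (k, rad k) (Hrad k)) as [Hz [_ HS]].
  destruct (Hsel (S k, rad (S k)) (Hrad (S k))) as [_ [Hr _]].
  repeat split; auto. apply Rlt_le, Hr.
Qed.

Record glued_family (W : nat -> X -> (X -> Prop) -> (X -> nat) -> Prop) (v : nat)
    (c : X) (Q : X -> Prop) (G : X -> nat) : Prop := {
  glued_family_center : G c = v;
  glued_family_cover : forall (T : X -> nat -> R) e b p,
    Dder d (fun z => T z (G z)) e b Q p -> p = c \/
    exists n z Q' g, W n z Q' g /\ Dder d (fun z => T z (g z)) e b Q' p /\ G p = g p;
  glued_family_dense : forall n rho, 0 < rho ->
    exists z Q' g, W n z Q' g /\ d c z < rho /\ forall p, Q' p -> Q p /\ G p = g p }.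

(* The pieces sit around points z_k -> c with d c z_(k+1) <= d c z_k / 10, hence in disjoint
   annuli, so derivatives of the glued set are computed piecewise; [cyc] makes every index n
   recur infinitely often along the sequence. *)
Lemma localizable_glue (c : X) (v : nat) (W : nat -> X -> (X -> Prop) -> (X -> nat) -> Prop) :
  (forall n rho, 0 < rho -> exists z, z <> c /\ d c z < rho /\ localizable d (W n) z) ->
  localizable d (glued_family W v) c.
Proof.
  intros H eps Heps.
  destruct (rapid_sequence c (eps / 2) (fun k z Q g =>
      closed d Q /\ (forall p, Q p -> d z p < d c z / 10) /\ W (cyc k) z Q g))
    as [zs [Qs [gs [H0 Hk]]]]; [lra| |].
  { intros k rho Hrho. destruct (H (cyc k) rho Hrho) as [z [Hz [Hcz Hloc]]].
    destruct (Hloc (d c z / 10)) as [Q [g HQ]].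
    { pose proof (dist_gt0 d Hd c z (not_eq_sym Hz)). lra. }
    exists z, Q, g. auto. }
  assert (Hneq : forall k, zs k <> c) by apply Hk.
  assert (Hdec : forall k, d c (zs (S k)) <= d c (zs k) / 10) by apply Hk.
  assert (Hsmall : forall k p, Qs k p -> d (zs k) p < d c (zs k) / 10) by apply Hk.
  assert (Hcl : forall k, closed d (Qs k)) by apply Hk.
  exists (glued c Qs), (glued_fun Qs gs v).
  split; [apply (glued_closed d Hd c zs Qs Hneq Hdec Hsmall Hcl)|]. split.
  { intros p Hp. pose proof (glued_ball d Hd c zs Qs Hneq Hdec Hsmall p Hp). lra. }
  split.
  - eapply (glued_fun_center d Hd c zs Qs); eauto.
  - intros T e b p Hp.
    destruct (glued_Dder_piece d Hd c zs Qs Hneq Hdec Hsmall gs v T e b p Hp)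
      as [|[k [HDk Hgk]]]; [left; auto | right].
    exists (cyc k), (zs k), (Qs k), (gs k). repeat split; auto. apply Hk.
  - intros n rho Hrho. destruct (zs_revisits d Hd c zs Hneq Hdec n rho Hrho) as [k [<- Hr]].
    exists (zs k), (Qs k), (gs k). repeat split; auto; [apply Hk | right; eauto |].
    eapply (glued_fun_piece d Hd c zs Qs); eauto.
Qed.

Lemma glued_family_Dder_center {W v c Q G} (T : X -> nat -> R) e (bs : nat -> ord) :
  closed d Q -> glued_family W v c Q G ->
  (forall n z Q' g, W n z Q' g -> Dder d (fun z => T z (g z)) e (bs n) Q' z) ->
  forall n, Dder d (fun z => T z (G z)) e (bs n) Q c.
Proof.
  intros HQ HG HW n. apply (Dder_closed d Hd _ _ _ _ HQ). intros rho Hrho.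
  destruct (glued_family_dense _ _ _ _ _ HG n rho Hrho) as [z [Q' [g [Hz [Hcz Hagree]]]]].
  exists z. split; auto. apply (Dder_extend d (fun z => T z (g z)) _ _ _ Q'); auto.
  intros p Hp. destruct (Hagree p Hp) as [? ->]. auto.
Qed.

Lemma glued_family_Dder_values {W v c Q G} (T : X -> nat -> R) e b (Pv : nat -> Prop) :
  glued_family W v c Q G -> Pv v ->
  (forall n z Q' g p, W n z Q' g -> Dder d (fun z => T z (g z)) e b Q' p -> Pv (g p)) ->
  forall p, Dder d (fun z => T z (G z)) e b Q p -> Pv (G p).
Proof.
  intros HG Hv HW p Hp.
  destruct (glued_family_cover _ _ _ _ _ HG T e b p Hp) as [->|[n [z [Q' [g [Hz [HD ->]]]]]]].
  - rewrite (glued_family_center _ _ _ _ _ HG). exact Hv.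
  - eapply HW; eauto.
Qed.

End GluedFamily.

Arguments glued_family_center {X d W v c Q G}.
Arguments glued_family_dense {X d W v c Q G}.

Lemma Rabs_INR_sub_neq (m n : nat) : m <> n -> Rabs (INR m - INR n) >= 1.
Proof.
  intro H. destruct (Nat.lt_total m n) as [Hl|[Hl|Hl]]; [|contradiction|];
    apply le_INR in Hl; rewrite S_INR in Hl.
  - rewrite Rabs_left by lra. lra.
  - rewrite Rabs_right by lra. lra.
Qed.

Lemma Rabs_INR_scale (N : nat) x y : Rabs (INR N * x - INR N * y) = INR N * Rabs (x - y).
Proof.
  rewrite <- Rmult_minus_distr_l, Rabs_mult, (Rabs_pos_eq (INR N)); auto. apply pos_INR.
Qed.

Section ScaledProperty.
Context {X : Type} (d : X -> X -> R) (Hd : is_metric d) (h : X -> R).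
Variables (F : X -> Prop) (a b : ord) (eta : R) (N : nat).
Hypothesis F_property : has_property d h a b F.
Hypothesis eta_pos : 0 < eta.
Hypothesis N_pos : (1 <= N)%nat.
Hypothesis N_eta : 1 <= INR N * eta.

(* A witness of property (a, b + be) at y, except that the value 1 is replaced by N. *)
Definition scaled_witness (be : ord) (y : X) (Q : X -> Prop) (g : X -> nat) : Prop :=
  g y = N /\ (forall p, Dder d (fun z => INR (g z)) 1 a Q p -> g p = N) /\
  Dder d (fun z => INR (g z) * h z) 1 (oadd b be) Q y.

Definition scaled_property (be : ord) : X -> Prop := localizable d (scaled_witness be).

Lemma scaled_property_base y : F y -> scaled_property OZ y.
Proof.
  intros Hy rho Hrho. destruct (F_property y Hy rho Hrho) as [Q [g [HQ [Hball [Hg HD]]]]].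
  assert (HN : 1 <= INR N) by (apply le_INR in N_pos; exact N_pos).
  exists Q, (fun z => (N * g z)%nat). repeat split; auto.
  - rewrite Hg; [lia | auto].
  - intros p Hp. rewrite Hg; [lia|]. left. revert Hp. apply Dder_jumps. intros x1 x2 Hx.
    apply Rabs_INR_sub_neq. intros E. rewrite E, Rminus_diag, Rabs_R0 in Hx. lra.
  - revert HD. apply Dder_jumps. intros x1 x2 Hx.
    rewrite !mult_INR, !Rmult_assoc, Rabs_INR_scale.
    pose proof (Rabs_pos (INR (g x1) * h x1 - INR (g x2) * h x2)). nra.
Qed.

Lemma scaled_property_antitone be be' y :
  ole be be' -> scaled_property be' y -> scaled_property be y.
Proof.
  intros Hle Hy rho Hrho. destruct (Hy rho Hrho) as [Q [g [? [? [? [? HD]]]]]].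
  exists Q, g. repeat split; auto. eapply Dder_antitone; [apply oadd_mono_r, Hle | exact HD].
Qed.

Lemma scaled_property_limit y (bes : nat -> ord) be :
  (forall Q f x, (forall n, Dder d f 1 (oadd b (bes n)) Q x) -> Dder d f 1 (oadd b be) Q x) ->
  (forall n r, 0 < r -> exists z, z <> y /\ d y z < r /\ scaled_property (bes n) z) ->
  scaled_property be y.
Proof.
  intros Hlim Hpts rho Hrho.
  destruct (localizable_glue d Hd y N _ Hpts rho Hrho) as [Q [G [HQ [Hball HG]]]].
  exists Q, G. repeat split; auto.
  - apply (glued_family_center HG).
  - apply (glued_family_Dder_values d (fun _ m => INR m) 1 a (fun m => m = N) HG); auto.
    intros n z Q' g p [_ [Hc _]]. apply Hc.
  - apply Hlim. apply (glued_family_Dder_center d Hd (fun z m => INR m * h z) 1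
                         (fun n => oadd b (bes n)) HQ HG).
    intros n z Q' g [_ [_ HD]]. exact HD.
Qed.

Lemma scaled_property_osc ga (T : X -> Prop) :
  (forall z, T z -> scaled_property ga z) ->
  forall z, Oosc d h eta T z -> scaled_property (OS ga) z.
Proof.
  intros HT z [Hz Hosc] rho Hrho.
  destruct (localizable_glue d Hd z N
    (fun _ w Q g => scaled_witness ga w Q g /\ Rabs (h w - h z) >= eta)) with (eps := rho)
    as [Q [G [HQ [Hball HG]]]]; auto.
  { intros n r Hr. destruct (Hosc r Hr) as [w [Hw [Hzw Hh]]]. exists w. repeat split; auto.
    - intros ->. rewrite Rminus_diag, Rabs_R0 in Hh. lra.
    - intros r' Hr'. destruct (HT w Hw r' Hr') as [Q [g [? [? ?]]]]. exists Q, g. auto. }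
  set (fG := fun z => INR (G z) * h z).
  assert (HDc : Dder d fG 1 (oadd b ga) Q z).
  { refine (glued_family_Dder_center d Hd (fun z m => INR m * h z) 1
             (fun _ => oadd b ga) HQ HG _ 0%nat).
    intros n w Q' g [[_ [_ HD]] _]. exact HD. }
  exists Q, G. do 2 (split; [assumption|]). split; [|split].
  - apply (glued_family_center HG).
  - apply (glued_family_Dder_values d (fun _ m => INR m) 1 a (fun m => m = N) HG); auto.
    intros n w Q' g p [[_ [Hc _]] _]. apply Hc.
  - change (D1 d fG 1 (Dder d fG 1 (oadd b ga) Q) z). split; auto.
    intros r Hr. destruct (glued_family_dense HG 0%nat r Hr)
      as [w [Q' [g [[[Hgw [_ HD]] Hh] [Hzw Hagree]]]]].
    assert (HGw : G w = N) by (rewrite <- Hgw; apply Hagree; eapply Dder_sub; eauto).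
    exists w, z. repeat split; auto.
    + apply (Dder_extend d (fun z => INR (g z) * h z) _ _ _ Q'); auto.
      intros p Hp. destruct (Hagree p Hp) as [? E]. unfold fG. rewrite E. auto.
    + rewrite dist_xx by exact Hd. lra.
    + unfold fG. rewrite HGw, (glued_family_center HG), Rabs_INR_scale.
      pose proof (pos_INR N). nra.
Qed.

Lemma iter_delta_scaled_property ga y :
  closed d F -> iter (delta d h eta) ga F y -> scaled_property ga y.
Proof.
  intro HF. revert y. induction ga as [|ga IH|f IH]; intros y Hy.
  - apply scaled_property_base; auto.
  - simpl in Hy. set (T := iter (delta d h eta) ga F) in *.
    destruct (classic (Oosc d h eta T y)) as [Ho|Ho].
    + eapply scaled_property_osc; eauto.
    + apply (scaled_property_limit y (fun _ => OS ga)); [intros Q f x H; apply (H 0%nat)|].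
      intros n r Hr. destruct (Hy r Hr) as [z [Hz Hyz]].
      exists z. repeat split; auto; [intros ->; contradiction|].
      eapply scaled_property_osc; eauto.
  - destruct (OL_attained_or_cofinal f) as [[n Hn]|Hcof].
    + eapply scaled_property_antitone; [exact Hn | apply IH, (Hy n)].
    + apply (scaled_property_limit y f); [intros Q g x H; exact H|].
      intros n r Hr. destruct (Hcof n) as [m Hm].
      pose proof (iter_delta_antitone d Hd h eta _ _ F y HF Hm (Hy m)) as Hy'.
      destruct (delta_derived d h eta _ y eta_pos Hy' r Hr) as [z [Hz [Hzy Hyz]]].
      exists z. repeat split; auto.
Qed.

End ScaledProperty.

Section Property.
Context {X : Type} (d : X -> X -> R) (Hd : is_metric d) (h : X -> R).

Lemma has_property_OZ P : has_property d h OZ OZ P.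
Proof.
  intros x _ eps Heps. exists (fun y => y = x), (fun _ => 1%nat). repeat split; auto.
  - intros p Hp. apply (dist_small_eq d Hd). intros r Hr.
    destruct (Hp r Hr) as [y [-> Hy]]. exact Hy.
  - intros p ->. rewrite dist_xx by exact Hd. exact Heps.
Qed.

Lemma has_property_weaken xi xi' zeta zeta' P :
  ole xi xi' -> ole zeta zeta' -> has_property d h xi zeta' P -> has_property d h xi' zeta P.
Proof.
  intros Hxi Hzeta HP x Hx eps Heps.
  destruct (HP x Hx eps Heps) as [Q [g [HQ [Hball [Hg HD]]]]].
  exists Q, g. repeat split; auto.
  - intros y [Hy|Hy]; apply Hg; [left; eapply Dder_antitone; eauto | right; exact Hy].
  - eapply Dder_antitone; eauto.
Qed.

Lemma has_property_Omega (s : nat -> ord) ze a b F :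
  closed d F -> ole ze (OL s) -> has_property d h a b F ->
  has_property d h (OS a) (oadd b ze) (Omega d h s F).
Proof.
  intros HF Hze HP x Hx eps Heps.
  destruct (localizable_glue d Hd x 1 (fun n z Q g =>
      (exists M, forall p, Dder d (fun z => INR (g z)) 1 a Q p -> g p = M) /\
      Dder d (fun z => INR (g z) * h z) 1 (oadd b (s n)) Q z)) with (eps := eps)
    as [Q [G [HQ [Hball HG]]]]; auto.
  { intros n r Hr. destruct (Hx n r Hr) as [z [[eta [Heta Hz]] [Hzx Hxz]]].
    destruct (INR_archimed eta 1 Heta) as [N HN].
    assert (HN1 : (1 <= N)%nat) by (destruct N; [simpl in HN; lra | lia]).
    pose proof (iter_delta_scaled_property d Hd h F a b eta N HP Heta HN1 ltac:(lra)
                  (s n) z HF Hz) as Hz'.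
    exists z. repeat split; auto.
    intros r' Hr'. destruct (Hz' r' Hr') as [Q [g [? [? [_ [Hc HD]]]]]].
    exists Q, g. repeat split; eauto. }
  exists Q, G. repeat split; auto.
  - intros y [Hy| ->]; [|apply (glued_family_center HG)].
    apply (glued_family_Dder_values d (fun _ m => INR m) 1 (OS a) (fun m => m = 1%nat) HG);
      auto.
    intros n z Q' g p [[M HM] _] Hp. exfalso.
    apply (D1_const d (fun z => INR (g z)) 1 (Dder d (fun z => INR (g z)) 1 a Q') (INR M) p);
      [lra | | exact Hp].
    intros q Hq. rewrite (HM q Hq). reflexivity.
  - apply (Dder_antitone d _ _ _ (oadd b (OL s))); [apply oadd_mono_r, Hze|].
    intro n. refine (glued_family_Dder_center d Hd (fun z m => INR m * h z) 1
                       (fun n => oadd b (s n)) HQ HG _ n).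
    intros k z Q' g [_ HD]. exact HD.
Qed.

Lemma has_property_Omega_iter_OL (s : nat -> ord) ze f P :
  closed d P ->
  (forall n, has_property d h (f n) (omul ze (f n)) (Omega_iter d h s (f n) P)) ->
  has_property d h (OL f) (omul ze (OL f)) (Omega_iter d h s (OL f) P).
Proof.
  intros HPc IH. destruct (OL_attained_or_cofinal f) as [[n Hn]|Hcof].
  { apply (has_property_weaken (f n) _ _ (omul ze (f n))); [eapply ole_L_r, ole_refl|
      apply omul_mono_r, Hn|].
    intros x Hx. apply IH, Hx. }
  intros x Hx eps Heps.
  destruct (localizable_glue d Hd x 1 (fun n z Q g =>
      (forall p, Dder d (fun z => INR (g z)) 1 (f n) Q p -> g p = 1%nat) /\
      Dder d (fun z => INR (g z) * h z) 1 (omul ze (f n)) Q z)) with (eps := eps)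
    as [Q [G [HQ [Hball HG]]]]; auto.
  { intros n r Hr. destruct (Hcof n) as [m Hm].
    pose proof (Omega_iter_antitone d Hd h s _ _ P x HPc Hm (Hx m)) as Hx'.
    destruct (Omega_derived d Hd h s _ (Omega_iter_closed d Hd h s (f n) P HPc) x Hx' r Hr)
      as [z [Hz [Hzx Hxz]]].
    exists z. repeat split; auto.
    intros r' Hr'. destruct (IH n z Hz r' Hr') as [Q [g [? [? [Hg HD]]]]].
    exists Q, g. repeat split; auto. }
  exists Q, G. repeat split; auto.
  - intros y [Hy| ->]; [|apply (glued_family_center HG)].
    apply (glued_family_Dder_values d (fun _ m => INR m) 1 (OL f) (fun m => m = 1%nat) HG);
      auto.
    intros n z Q' g p [Hg _] Hp. apply Hg, (Dder_antitone d _ _ (f n) (OL f)); auto.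
    eapply ole_L_r, ole_refl.
  - intro n. refine (glued_family_Dder_center d Hd (fun z m => INR m * h z) 1
                       (fun n => omul ze (f n)) HQ HG _ n).
    intros k z Q' g [_ HD]. exact HD.
Qed.

End Property.

Theorem proposition4p16
  (X : Type) (d : X -> X -> R) (Hd : polish_metric d) (h : X -> R)
  (alpha xi : ord)
  (s : nat -> ord)
  (Hs_inc : forall n, olt (s n) (s (S n)))
  (Hs_lim : oeq (OL s) (oexp_omega (oexp_omega xi)))
  (P : X -> Prop) (HP : closed d P) :
  has_property d h alpha (omul (oexp_omega (oexp_omega xi)) alpha)
    (Omega_iter d h s alpha P).
Proof.
  destruct Hd as [Hm _]. destruct Hs_lim as [_ Hze].
  induction alpha as [|a IH|f IH].
  - apply (has_property_OZ d Hm).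
  - apply (has_property_Omega d Hm); auto. apply Omega_iter_closed; auto.
  - apply (has_property_Omega_iter_OL d Hm); auto.
Qed.
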